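(* Let $g:\{0,1,2,3\}^*\to\{0,1,2,3\}^*$ be the morphism $g(0)=01$, $g(1)=20$, $g(2)=23$, $g(3)=02$, and $\tau$ the coding $\tau(0)=2$, $\tau(1)=1$, $\tau(2)=0$, $\tau(3)=1$; let $\mathbf{vtm}=\tau(g^\omega(0))$. Let $\zeta:\{0,1,2\}^*\to\{0,1\}^*$ be the morphism $\zeta(0)=111000110010110001110010$, $\zeta(1)=111000101100011100101100010$, $\zeta(2)=111000110010110001011100101100$. Then the infinite word $\zeta(\mathbf{vtm})$ contains only three distinct squares, namely $0^2$, $1^2$, and $(01)^2$. It is generated by a $2$-automaton with $88$ states (so its weight is $2\cdot 88=176$).
   Context: A square is a nonempty word $xx$; ''containing'' means as a factor. $g^\omega(0)$ denotes the infinite fixed point of $g$ starting with $0$. A $2$-automaton (DFAO) with $s$ states generates $(a_n)_{n\ge0}$ if on input the base-$2$ representation of $n$ (most significant digit first) it outputs $a_n$; equivalently the word is the image under a coding of a fixed point of a $2$-uniform morphism on $s$ letters. The weight of such a word is $2\cdot s$. *)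

From mathcomp Require Import all_boot.
Set Implicit Arguments. Unset Strict Implicit. Unset Printing Implicit Defensive.

(* Letters are natural numbers; finite words are [seq nat];
   infinite words are functions [nat -> nat]. *)

Definition g (a : nat) : seq nat :=
  match a with
  | 0 => [:: 0; 1]
  | 1 => [:: 2; 0]
  | 2 => [:: 2; 3]
  | 3 => [:: 0; 2]
  | _ => [::]
  end.

Definition morph (h : nat -> seq nat) (w : seq nat) : seq nat := flatten (map h w).

Definition gpow (k : nat) : seq nat := iter k (morph g) [:: 0].

(* The fixed point g^omega(0): its n-th letter is the n-th letter of
   g^(n+1)(0), which has length 2^(n+1) > n (and g^k(0) is a prefix of
   g^(k+1)(0) since g(0) starts with 0). *)
Definition g_omega (n : nat) : nat := nth 0 (gpow n.+1) n.

Definition tau (a : nat) : nat :=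
  match a with
  | 0 => 2
  | 1 => 1
  | 2 => 0
  | 3 => 1
  | _ => 0
  end.

Definition vtm (n : nat) : nat := tau (g_omega n).

Definition zeta (a : nat) : seq nat :=
  match a with
  | 0 => [:: 1;1;1;0;0;0;1;1;0;0;1;0;1;1;0;0;0;1;1;1;0;0;1;0]
  | 1 => [:: 1;1;1;0;0;0;1;0;1;1;0;0;0;1;1;1;0;0;1;0;1;1;0;0;0;1;0]
  | 2 => [:: 1;1;1;0;0;0;1;1;0;0;1;0;1;1;0;0;0;1;0;1;1;1;0;0;1;0;1;1;0;0]
  | _ => [::]
  end.

(* The infinite word zeta(vtm): its n-th letter is the n-th letter of
   zeta(vtm[0..n]) (every zeta-image is nonempty, so this word has length > n). *)
Definition zeta_vtm (n : nat) : nat :=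
  nth 0 (morph zeta (mkseq vtm n.+1)) n.

Definition factor (w : nat -> nat) (i m : nat) : seq nat :=
  mkseq (fun j => w (i + j)) m.

Definition contains_square (w : nat -> nat) (x : seq nat) : Prop :=
  x <> [::] /\ exists i, factor w i (2 * size x) = x ++ x.

Fixpoint bin_lsb (fuel n : nat) : seq bool :=
  match fuel with
  | 0 => [::]
  | fuel'.+1 => if n is 0 then [::] else odd n :: bin_lsb fuel' n./2
  end.

(* Canonical base-2 representation of n, most significant digit first,
   without leading zeros (the representation of 0 is the empty word). *)
Definition bin_msd (n : nat) : seq bool := rev (bin_lsb n n).

Definition dfao_generates (s : nat) (q0 : 'I_s) (delta : 'I_s -> bool -> 'I_s)
  (out : 'I_s -> nat) (a : nat -> nat) : Prop :=
  forall n, out (foldl delta q0 (bin_msd n)) = a n.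

From mathcomp Require Import all_boot zify.
Set Implicit Arguments. Unset Strict Implicit. Unset Printing Implicit Defensive.

(* The letter vtm n only depends on the pair (tm n, tm (n + 1)) of letters of the
   Thue-Morse word tm, so a square in vtm would give an overlap in tm: vtm is
   squarefree.  As |zeta (vtm j)| = 27 + 3 (tm (j + 1) - tm j), the block zeta (vtm j)
   starts at position 27 j + 3 tm j of zeta(vtm).  Every block begins with the marker
   111000, which occurs nowhere else, so a square of period p >= 35 sends block starts
   to block starts; as zeta is a prefix code that moreover cannot glue a suffix of one
   image to a prefix of another into a third, the square descends to a square of vtm.
   Squares of period at most 34 are read off the images of the finitely many factors
   of length 5 of vtm.
   Reading one more binary digit moves position start j + o to block 2j, 2j + 1 or
   2j + 2, whose letters only depend on (tm j, tm (j + 1)); so zeta(vtm) is generated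
   by an automaton on the triples (tm j, tm (j + 1), o), whose 108 states fall into
   88 Nerode classes. *)

Lemma morph_cat (h : nat -> seq nat) s t : morph h (s ++ t) = morph h s ++ morph h t.
Proof. by rewrite /morph map_cat flatten_cat. Qed.

Lemma morph_rcons (h : nat -> seq nat) s a : morph h (rcons s a) = morph h s ++ h a.
Proof. by rewrite -cats1 morph_cat /morph /= cats0. Qed.

Lemma mkseqD (T : Type) (f : nat -> T) m n :
  mkseq f (m + n) = mkseq f m ++ mkseq (fun k => f (m + k)) n.
Proof.
rewrite /mkseq iotaD map_cat add0n; congr (_ ++ _).
by rewrite -[m in iota m]addn0 iotaDl -map_comp.
Qed.

Lemma take_drop_mkseq (T : Type) (f : nat -> T) r n N : r + n <= N ->
  take n (drop r (mkseq f N)) = mkseq (fun k => f (r + k)) n.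
Proof.
move=> le_N; rewrite -(subnKC le_N) -addnA mkseqD drop_size_cat ?size_mkseq //.
by rewrite mkseqD take_size_cat ?size_mkseq.
Qed.

Lemma all_iotaP (P : pred nat) m n k : all P (iota m n) -> m <= k < m + n -> P k.
Proof. by move=> /allP allP_ lt_k; apply: allP_; rewrite mem_iota. Qed.

(** * Thue-Morse and vtm *)

Lemma bin_lsb_fuel f f' n : n <= f -> n <= f' -> bin_lsb f n = bin_lsb f' n.
Proof.
elim: f f' n => [|f IHf] [|f'] [|n] //= le_nf le_nf'.
by congr cons; apply: IHf; lia.
Qed.

Lemma bin_lsb_half n : 0 < n -> bin_lsb n n = odd n :: bin_lsb n./2 n./2.
Proof. by case: n => // n _ /=; congr cons; apply: bin_lsb_fuel; lia. Qed.

Lemma bin_msd_half n : 0 < n -> bin_msd n = rcons (bin_msd n./2) (odd n).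
Proof. by move=> n_gt0; rewrite /bin_msd bin_lsb_half // rev_cons. Qed.

Definition tm (n : nat) : bool := odd (count id (bin_lsb n n)).

Lemma tm_half n : tm n = odd n (+) tm n./2.
Proof. by case: n => [//|n]; rewrite /tm bin_lsb_half //= oddD oddb. Qed.

Lemma tm_mul2D n (b : bool) : tm (2 * n + b) = b (+) tm n.
Proof. by rewrite tm_half mul2n addnC half_bit_double oddD odd_double oddb addbF. Qed.

Lemma tm_mul2 n : tm (2 * n) = tm n.
Proof. by have := tm_mul2D n false; rewrite addn0. Qed.

Lemma tm_mul2S n : tm (2 * n).+1 = ~~ tm n.
Proof. by have := tm_mul2D n true; rewrite addn1. Qed.

Lemma tm_evenS m : ~~ odd m -> tm m.+1 = ~~ tm m.
Proof.
by move=> m_even; rewrite -[m]odd_double_half (negPf m_even) -mul2n tm_mul2S tm_mul2.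
Qed.

Lemma tm_alternate i p : odd p -> (forall k, k <= p -> tm (i + k) = tm (i + p + k)) ->
  forall k, k < p -> tm (i + k).+1 = ~~ tm (i + k).
Proof.
move=> p_odd per k lt_kp; case/boolP: (odd (i + k)) => [ik_odd|]; last exact: tm_evenS.
have ikp_even : ~~ odd (i + p + k) by rewrite addnAC oddD ik_odd p_odd.
by rewrite -addnS per // addnS tm_evenS // -per 1?ltnW.
Qed.

Lemma tm_overlap_free i p : 0 < p -> ~ (forall k, k <= p -> tm (i + k) = tm (i + p + k)).
Proof.
elim/ltn_ind: p i => p IHp i p_gt0 per.
(* An odd period makes tm alternate on [i, i + p]; an even one halves. *)
case/boolP: (odd p) => [p_odd | p_even].
  have drift k : k <= p -> tm (i + k) = odd k (+) tm i.
    elim: k => [|k IHk] le_kp; first by rewrite addn0.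
    by rewrite addnS (tm_alternate p_odd per) // IHk 1?ltnW //= addNb.
  have := drift p (leqnn p); rewrite -[i + p]addn0 -per // addn0 p_odd.
  by case: (tm i).
have p_eq : p = 2 * p./2 by rewrite -[p in LHS]odd_double_half (negPf p_even) mul2n.
apply: (IHp p./2 _ i./2); [lia | lia |].
move=> k le_k; have := per (2 * k) ltac:(lia).
have -> : i + 2 * k = 2 * (i./2 + k) + odd i by rewrite -[i in LHS]odd_double_half; lia.
have -> : i + p + 2 * k = 2 * (i./2 + p./2 + k) + odd i.
  by rewrite -[i in LHS]odd_double_half [p in LHS]p_eq; lia.
by rewrite !tm_mul2D => /addbI.
Qed.

Definition g_letter (a c : bool) : nat :=
  match a, c with
  | false, true => 0 | true, true => 1 | true, false => 2 | false, false => 3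
  end.

Definition vtm_letter (a c : bool) : nat := if a == c then 1 else if a then 0 else 2.

Lemma morph_uniform2 (h : nat -> seq nat) (u : nat -> nat) :
  (forall m, h (u m) = [:: u (2 * m); u (2 * m).+1]) ->
  forall n, morph h (mkseq u n) = mkseq u (2 * n).
Proof.
move=> hu; elim=> [//|n IHn].
by rewrite mkseqS morph_rcons IHn hu mulnS add2n !mkseqS -!cats1 -catA.
Qed.

Definition g_fix (n : nat) : nat := g_letter (tm n) (tm n.+1).

Lemma g_fix_mul2 m : g (g_fix m) = [:: g_fix (2 * m); g_fix (2 * m).+1].
Proof.
rewrite /g_fix (_ : (2 * m).+2 = 2 * m.+1); last by lia.
by rewrite tm_mul2S !tm_mul2; case: (tm m); case: (tm m.+1).
Qed.

Lemma g_omegaE n : g_omega n = g_fix n.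
Proof.
have gpowE k : gpow k = mkseq g_fix (2 ^ k).
  elim: k => [//|k IHk].
  by rewrite /gpow iterS -/(gpow k) IHk (morph_uniform2 g_fix_mul2) expnS.
by rewrite /g_omega gpowE nth_mkseq // expnS; have := ltn_expl n (ltnSn 1); lia.
Qed.

Lemma vtm_tm n : vtm n = vtm_letter (tm n) (tm n.+1).
Proof. by rewrite /vtm g_omegaE /g_fix; case: (tm n); case: (tm n.+1). Qed.

Lemma vtm_lt3 n : vtm n < 3.
Proof. by rewrite vtm_tm /vtm_letter; case: ifP => // _; case: ifP. Qed.

Lemma vtm_square_free j j' : j < j' ->
  ~ (forall r, r < j' - j -> vtm (j + r) = vtm (j' + r)).
Proof.
move=> lt_j sq; have q_gt0 : 0 < j' - j by rewrite subn_gt0.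
have {}sq r : r < j' - j -> vtm (j + r) = vtm (j + (j' - j) + r).
  by rewrite (subnKC (ltnW lt_j)); exact: sq.
move: (j' - j) q_gt0 sq => q q_gt0 sq.
have letter_eq r : r < q ->
    (tm (j + r).+1 == tm (j + q + r).+1) = (tm (j + r) == tm (j + q + r)).
  by move=> /sq; rewrite !vtm_tm /vtm_letter; do 4!case: (tm _).
case/boolP: (tm j == tm (j + q)) => [eq0 | neq0].
  apply: (tm_overlap_free (i := j) q_gt0) => k; elim: k => [|k IHk] le_kq.
    by rewrite !addn0; apply/eqP.
  by apply/eqP; rewrite !addnS letter_eq // IHk 1?ltnW.
(* Equal letters over complementary pairs of tm-values can only be 1 = vtm_letter a a. *)
have const k : k <= q -> tm (j + k) = tm j /\ tm (j + q + k) = tm (j + q).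
  elim: k => [|k IHk] le_kq; first by rewrite !addn0.
  have [eq_j eq_jq] := IHk (ltnW le_kq); have := sq k le_kq.
  rewrite !vtm_tm !addnS eq_j eq_jq; move: neq0.
  by case: (tm j); case: (tm (j + q)); case: (tm _.+1); case: (tm _.+1).
by have [eq_q _] := const q (leqnn q); rewrite eq_q eqxx in neq0.
Qed.

(** * Blocks of a morphic image *)

Section MorphicImage.
Variables (h : nat -> seq nat) (u : nat -> nat).
Hypothesis size_h_gt0 : forall j, 0 < size (h (u j)).

(* [zeta_vtm] is [morphic_word zeta vtm] by definition. *)
Definition morphic_word (n : nat) : nat := nth 0 (morph h (mkseq u n.+1)) n.

Definition blocks (j K : nat) : seq nat := morph h (factor u j K).

Definition block_start (j : nat) : nat := size (morph h (mkseq u j)).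

Lemma morph_mkseqD j K : morph h (mkseq u (j + K)) = morph h (mkseq u j) ++ blocks j K.
Proof. by rewrite mkseqD morph_cat. Qed.

Lemma block_startD j K : block_start (j + K) = block_start j + size (blocks j K).
Proof. by rewrite /block_start morph_mkseqD size_cat. Qed.

Lemma block_startS j : block_start j.+1 = block_start j + size (h (u j)).
Proof. by rewrite -addn1 block_startD /blocks /factor /morph /= addn0 cats0. Qed.

Lemma leq_block_start : {mono block_start : j j' / j <= j'}.
Proof.
apply/leq_mono; apply: homo_ltn => [j j' j''|j]; first exact: ltn_trans.
by rewrite block_startS -addn1 leq_add2l.
Qed.

Lemma ltn_block_start : {mono block_start : j j' / j < j'}.
Proof. exact/leqW_mono/leq_block_start. Qed.

Lemma block_start_ge j : j <= block_start j.
Proof. by elim: j => [//|j IHj]; rewrite block_startS -addn1 leq_add. Qed.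

Lemma morphic_word_prefix N n : n < size (morph h (mkseq u N)) ->
  morphic_word n = nth 0 (morph h (mkseq u N)) n.
Proof.
have lt_n : n < size (morph h (mkseq u n.+1)) by apply: block_start_ge.
rewrite /morphic_word; case: (leqP N n.+1) => [le_N | lt_N] lt_nN.
  by rewrite -(subnKC le_N) morph_mkseqD nth_cat lt_nN.
by rewrite -(subnKC (ltnW lt_N)) morph_mkseqD nth_cat lt_n.
Qed.

Lemma nth_blocks j K x : x < size (blocks j K) ->
  morphic_word (block_start j + x) = nth 0 (blocks j K) x.
Proof.
move=> lt_x; rewrite (@morphic_word_prefix (j + K)).
  by rewrite morph_mkseqD nth_cat ltnNge leq_addr addKn.
by rewrite -/(block_start _) block_startD ltn_add2l.
Qed.

Lemma factor_blocks j K o m : o + m <= size (blocks j K) ->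
  factor morphic_word (block_start j + o) m = take m (drop o (blocks j K)).
Proof.
move=> le_om; apply: (@eq_from_nth _ 0) => [|k].
  by rewrite size_mkseq size_takel // size_drop; lia.
rewrite size_mkseq => lt_km.
by rewrite nth_mkseq // nth_take // nth_drop -addnA (nth_blocks (K := K)) //; lia.
Qed.

Lemma factor_block j o m : o + m <= size (h (u j)) ->
  factor morphic_word (block_start j + o) m = take m (drop o (h (u j))).
Proof.
have blocks1 : blocks j 1 = h (u j) by rewrite /blocks /factor /morph /= addn0 cats0.
by rewrite -blocks1; apply: factor_blocks.
Qed.

Lemma morphic_word_block j o : o < size (h (u j)) ->
  morphic_word (block_start j + o) = nth 0 (h (u j)) o.
Proof.
move=> lt_o; have := @factor_block j o 1 ltac:(by rewrite addn1).
by rewrite /factor /mkseq /= addn0 (drop_nth 0 lt_o) => -[].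
Qed.

Lemma block_decomposition n : exists j o, n = block_start j + o /\ o < size (h (u j)).
Proof.
elim: n => [|n [j [o [-> lt_o]]]]; first by exists 0, 0; split; last exact: size_h_gt0.
case: (ltnP o.+1 (size (h (u j)))) => [lt_o1 | le_o1].
  by exists j, o.+1; rewrite addnS.
by exists j.+1, 0; rewrite block_startS; have := size_h_gt0 j.+1; lia.
Qed.

End MorphicImage.

Local Notation start := (block_start zeta vtm).

Lemma size_zeta_vtm j : size (zeta (vtm j)) = 27 + 3 * tm j.+1 - 3 * tm j.
Proof. by rewrite vtm_tm; case: (tm j); case: (tm j.+1). Qed.

Lemma size_zeta_vtm_bounds j : 24 <= size (zeta (vtm j)) <= 30.
Proof. by rewrite size_zeta_vtm; case: (tm j); case: (tm j.+1). Qed.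

Lemma size_zeta_vtm_gt0 j : 0 < size (zeta (vtm j)).
Proof. by have := size_zeta_vtm_bounds j; lia. Qed.

Lemma leq_start_zeta_vtm : {mono start : j j' / j <= j'}.
Proof. exact: leq_block_start size_zeta_vtm_gt0. Qed.

Lemma ltn_start_zeta_vtm : {mono start : j j' / j < j'}.
Proof. exact: ltn_block_start size_zeta_vtm_gt0. Qed.

Lemma block_start_zeta_vtm j : start j = 27 * j + 3 * tm j.
Proof.
elim: j => [//|j IHj]; rewrite block_startS IHj size_zeta_vtm.
by case: (tm j); case: (tm j.+1) => /=; lia.
Qed.

Lemma factor_zeta_vtm j o m : o + m <= size (zeta (vtm j)) ->
  factor zeta_vtm (start j + o) m = take m (drop o (zeta (vtm j))).
Proof. exact: (factor_block (h := zeta) (u := vtm) size_zeta_vtm_gt0). Qed.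

Lemma zeta_vtm_block j o : o < size (zeta (vtm j)) ->
  zeta_vtm (start j + o) = nth 0 (zeta (vtm j)) o.
Proof. exact: (morphic_word_block (h := zeta) (u := vtm) size_zeta_vtm_gt0). Qed.

Lemma factor_start_zeta_vtm j m : m <= size (zeta (vtm j)) ->
  factor zeta_vtm (start j) m = take m (zeta (vtm j)).
Proof. by move=> le_m; rewrite -[start j]addn0 factor_zeta_vtm ?drop0. Qed.

Definition zeta_marker : seq nat := [:: 1; 1; 1; 0; 0; 0].

Definition zeta_marker_synchronizing : bool :=
  all (fun a => all (fun c => all (fun o =>
    take 6 (drop o (zeta a ++ zeta c)) != zeta_marker)
  (iota 1 (size (zeta a) - 1))) (iota 0 3)) (iota 0 3).

Lemma zeta_marker_synchronizingP : zeta_marker_synchronizing.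
Proof. by vm_compute. Qed.

Lemma zeta_vtm_markerP n : factor zeta_vtm n 6 = zeta_marker <-> exists j, n = start j.
Proof.
split=> [|[j ->]]; last first.
  rewrite factor_start_zeta_vtm; last by have := size_zeta_vtm_bounds j; lia.
  by have := vtm_lt3 j; case: (vtm j) => [|[|[|]]].
have [j [[|o] [-> lt_o]]] := block_decomposition size_zeta_vtm_gt0 n.
  by exists j; rewrite addn0.
have blocks2 : blocks zeta vtm j 2 = zeta (vtm j) ++ zeta (vtm j.+1).
  by rewrite /blocks /factor /morph /= addn0 addn1 cats0.
rewrite (factor_blocks size_zeta_vtm_gt0 (K := 2)) blocks2; last first.
  by rewrite size_cat; have := size_zeta_vtm_bounds j.+1; lia.
have := all_iotaP zeta_marker_synchronizingP (vtm_lt3 j).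
move=> /all_iotaP /(_ (vtm_lt3 j.+1)) /(all_iotaP (k := o.+1)).
by move=> /(_ ltac:(lia)) /eqP.
Qed.

Lemma zeta_prefix_inj a c : a < 3 -> c < 3 -> take 24 (zeta a) = take 24 (zeta c) -> a = c.
Proof. by case: a => [|[|[|]]] // _; case: c => [|[|[|]]] // _ /eqP. Qed.

(* Beyond [minn s (size (zeta c))] letters the copy of the prefix runs into the next block. *)
Definition zeta_bifix_free : bool :=
  all (fun a => all (fun c => all (fun z => all (fun s =>
    let m := minn s (size (zeta c)) in
    [|| c == a, z == a, take m (zeta a) != take m (zeta c)
      | ~~ suffix (drop s (zeta a)) (zeta z)])
  (iota 1 (size (zeta a) - 1))) (iota 0 3)) (iota 0 3)) (iota 0 3).

Lemma zeta_bifix_freeP : zeta_bifix_free.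
Proof. by vm_compute. Qed.

Lemma zeta_bifix a c z s : a < 3 -> c < 3 -> z < 3 -> 0 < s < size (zeta a) ->
  let m := minn s (size (zeta c)) in take m (zeta a) = take m (zeta c) ->
  suffix (drop s (zeta a)) (zeta z) -> c = a \/ z = a.
Proof.
move=> lt_a lt_c lt_z lt_s /= pre suf.
have := all_iotaP zeta_bifix_freeP lt_a => /all_iotaP /(_ lt_c) /all_iotaP /(_ lt_z).
move=> /(all_iotaP (k := s)) /(_ ltac:(lia)) /=; rewrite pre suf eqxx !orbF.
by case/orP => /eqP; [left | right].
Qed.

(** * Squares of zeta(vtm) *)

Section LongSquare.
Variables i p : nat.
Hypothesis p_ge35 : 35 <= p.
Hypothesis sq : forall k, k < p -> zeta_vtm (i + k) = zeta_vtm (i + p + k).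

Lemma factor_period x m : i <= x -> x + m <= i + p ->
  factor zeta_vtm (x + p) m = factor zeta_vtm x m.
Proof.
move=> le_ix le_xm; apply/eq_in_map => k; rewrite mem_iota => /andP [_ lt_km].
by rewrite (_ : x + k = i + (x + k - i)) ?sq; [congr zeta_vtm | | ]; lia.
Qed.

Lemma block_start_period x : i <= x -> x + 6 <= i + p ->
  (exists j, x = start j) <-> (exists j, x + p = start j).
Proof. by move=> le_ix le_x6; rewrite -!zeta_vtm_markerP factor_period. Qed.

Lemma copy_blocks j1 j2 R : i <= start j1 -> start j2 = start j1 + p ->
  start (j1 + R) <= i + p ->
  (forall r, r < R -> vtm (j1 + r) = vtm (j2 + r)) /\ start (j2 + R) = start (j1 + R) + p.
Proof.
move=> le_i shift; elim: R => [|R IHR] le_R; first by rewrite !addn0.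
have le_R' : start (j1 + R) <= i + p.
  by apply: leq_trans _ le_R; rewrite leq_start_zeta_vtm; lia.
have [copy shiftR] := IHR le_R'.
have fits : start (j1 + R) + size (zeta (vtm (j1 + R))) <= i + p.
  by rewrite -block_startS -addnS.
have le_iR : i <= start (j1 + R) by apply: leq_trans le_i _; rewrite leq_start_zeta_vtm; lia.
have eqR : vtm (j1 + R) = vtm (j2 + R).
  apply: zeta_prefix_inj; rewrite ?vtm_lt3 //.
  have := size_zeta_vtm_bounds (j1 + R); have := size_zeta_vtm_bounds (j2 + R) => sz2 sz1.
  rewrite -!factor_start_zeta_vtm ?shiftR ?factor_period //; lia.
split=> [r|]; last by rewrite !addnS !block_startS shiftR eqR; lia.
by rewrite ltnS leq_eqVlt => /predU1P [->|]; [exact: eqR | exact: copy].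
Qed.

Lemma shifted_block j1 : i <= start j1 -> start j1 + 6 <= i + p ->
  exists2 j2, j1 < j2 & start j2 = start j1 + p.
Proof.
move=> le_i le_6; have [|j2 shift] := (block_start_period le_i le_6).1; first by exists j1.
by exists j2 => //; rewrite -ltn_start_zeta_vtm -shift; lia.
Qed.

Lemma aligned_square_absurd j : i = start j -> False.
Proof.
move=> eq_i; have [j2 lt_j shift] := shifted_block (j1 := j) ltac:(lia) ltac:(lia).
have jq : j + (j2 - j) = j2 by lia.
have [copy _] := copy_blocks (j1 := j) (R := j2 - j) ltac:(lia) shift ltac:(rewrite jq; lia).
exact: (vtm_square_free lt_j).
Qed.

(* Otherwise the marker at start j2.-1 would shift back by p into block j. *)
Lemma last_block_start_lt j j2 : start j < i < start j.+1 ->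
  start j2 = start j.+1 + p -> j.+1 < j2 -> start j2.-1 < i + p.
Proof.
move=> lt_i shift lt_j2; rewrite ltnNge; apply/negP => le_l.
have start_j1 := block_startS zeta vtm j.
have := size_zeta_vtm_bounds j => /andP [_ sz_j].
have lt_l : start j2.-1 < start j2 by rewrite ltn_start_zeta_vtm; lia.
have [|j' eq_j'] := (block_start_period (x := start j2.-1 - p) ltac:(lia) ltac:(lia)).2.
  by exists j2.-1; lia.
have : start j < start j' < start j.+1 by rewrite -eq_j'; lia.
by rewrite !ltn_start_zeta_vtm; lia.
Qed.

(* Block l straddles i + p: its prefix is copied to block c and its suffix comes from
   block j, so by [zeta_bifix] it equals one of them, and either way the copied blocks
   extend to a square of vtm. *)
Lemma unaligned_square_absurd j : start j < i < start j.+1 -> False.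
Proof.
move=> lt_i; have /andP [lt_ji _] := lt_i; have start_j1 := block_startS zeta vtm j.
have := size_zeta_vtm_bounds j => /andP [_ sz_j].
have [j2 lt_j12 shift] := shifted_block (j1 := j.+1) ltac:(lia) ltac:(lia).
have last_lt := last_block_start_lt lt_i shift lt_j12.
set l := j2.-1 in last_lt; have j2_l : j2 = l.+1 by rewrite /l prednK //; lia.
have jl : j.+1 + (l - j.+1) = l by lia.
have [copy shift_l] := copy_blocks (j1 := j.+1) (R := l - j.+1) ltac:(lia) shift
  ltac:(rewrite jl; lia).
rewrite jl in shift_l; set c := j2 + (l - j.+1) in shift_l.
have start_j2 := block_startS zeta vtm l; rewrite -j2_l in start_j2.
have := size_zeta_vtm_bounds l => /andP [sz_l _].
have le_jl : start j.+1 <= start l by rewrite leq_start_zeta_vtm; lia.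
set s := i + p - start l; have s_range : 0 < s < size (zeta (vtm l)) by rewrite /s; lia.
have pre : take (minn s (size (zeta (vtm c)))) (zeta (vtm l)) =
           take (minn s (size (zeta (vtm c)))) (zeta (vtm c)).
  by rewrite -!factor_start_zeta_vtm ?shift_l ?factor_period //; lia.
have suf : suffix (drop s (zeta (vtm l))) (zeta (vtm j)).
  have lhs : factor zeta_vtm (i + p) (size (zeta (vtm l)) - s) = drop s (zeta (vtm l)).
    by rewrite (_ : i + p = start l + s) ?factor_zeta_vtm ?take_oversize ?size_drop //; lia.
  have rhs : factor zeta_vtm i (size (zeta (vtm l)) - s) = drop (i - start j) (zeta (vtm j)).
    rewrite -{1}(subnKC (ltnW lt_ji)) factor_zeta_vtm ?take_oversize ?size_drop //; lia.
  by rewrite -lhs factor_period ?rhs ?suffix_drop //; lia.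
have [c_l | j_l] := zeta_bifix (vtm_lt3 l) (vtm_lt3 c) (vtm_lt3 j) s_range pre suf.
  apply: (vtm_square_free lt_j12) => r lt_r.
  have [lt_rl | ->] : r < l - j.+1 \/ r = l - j.+1 by lia.
    exact: copy.
  by rewrite jl c_l.
apply: (@vtm_square_free j l); first lia.
case=> [|r] lt_r; first by rewrite !addn0 j_l.
by rewrite -addSnnS copy; try congr vtm; lia.
Qed.

End LongSquare.

Lemma zeta_vtm_long_square_free i p : 35 <= p ->
  ~ (forall k, k < p -> zeta_vtm (i + k) = zeta_vtm (i + p + k)).
Proof.
move=> p_ge35 sq; have [j [[|o] [eq_i lt_o]]] := block_decomposition size_zeta_vtm_gt0 i.
  by apply: (aligned_square_absurd p_ge35 sq (j := j)); rewrite eq_i addn0.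
by apply: (unaligned_square_absurd p_ge35 sq (j := j)); rewrite eq_i block_startS; lia.
Qed.

Definition tm_factor (i n : nat) : seq bool := mkseq (fun k => tm (i + k)) n.

Definition tm_morph (w : seq bool) : seq bool := flatten [seq [:: b; ~~ b] | b <- w].

Lemma tm_morph_factor i n : tm_morph (tm_factor i n) = tm_factor (2 * i) (2 * n).
Proof.
elim: n => [//|n IHn].
rewrite /tm_morph /tm_factor mkseqS map_rcons flatten_rcons -/(tm_morph _) IHn.
rewrite (_ : 2 * n.+1 = (2 * n).+2) ?mkseqS -?cats1 -?catA; last by lia.
by rewrite addnS -!mulnDr tm_mul2 tm_mul2S.
Qed.

Lemma tm_factor_in (L : seq (seq bool)) n : tm_factor 0 n \in L ->
  all (fun w => (take n (tm_morph w) \in L) && (take n (drop 1 (tm_morph w)) \in L)) L ->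
  forall i, tm_factor i n \in L.
Proof.
move=> L0 closed i; elim/ltn_ind: i => -[//|i] IHi.
have /andP [in0 in1] := allP closed _ (IHi i.+1./2 ltac:(lia)).
have -> : tm_factor i.+1 n = take n (drop (odd i.+1) (tm_morph (tm_factor i.+1./2 n))).
  rewrite tm_morph_factor; case: n {L0 closed in0 in1 IHi} => [|n]; first by rewrite take0.
  rewrite take_drop_mkseq; last by case: (odd _); lia.
  by apply: eq_mkseq => k; congr tm; have := odd_double_half i.+1; lia.
by case: (odd i.+1); rewrite ?drop0.
Qed.

Definition tm_factors6 : seq (seq bool) := [seq tm_factor i 6 | i <- iota 0 24].

Lemma tm_factors6P i : tm_factor i 6 \in tm_factors6.
Proof. by apply: tm_factor_in; vm_compute. Qed.

Definition vtm_of_tm (w : seq bool) : seq nat := pairmap vtm_letter (head false w) (behead w).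

Lemma factor_vtm5 i : factor vtm i 5 = vtm_of_tm (tm_factor i 6).
Proof. by rewrite /factor /tm_factor /mkseq /= !vtm_tm !addnS !addn0. Qed.

Definition zeta_vtm_squares : seq (seq nat) := [:: [:: 0]; [:: 1]; [:: 0; 1]].

(* A square of period at most 34 starting in block j fits in the blocks j, ..., j + 4. *)
Definition zeta_short_squares_ok : bool :=
  all (fun w => all (fun o => all (fun q =>
    let s := take (2 * q) (drop o (morph zeta w)) in
    (take q s == drop q s) ==> (take q s \in zeta_vtm_squares))
  (iota 1 34)) (iota 0 (size (zeta (head 0 w))))) [seq vtm_of_tm w | w <- tm_factors6].

Lemma zeta_short_squares_okP : zeta_short_squares_ok.
Proof. by vm_compute. Qed.

Lemma zeta_vtm_short_square x : contains_square zeta_vtm x -> size x <= 34 ->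
  x \in zeta_vtm_squares.
Proof.
move=> [x_neq0 [i sq]] le_x; have x_gt0 : 0 < size x by rewrite lt0n size_eq0; apply/eqP.
have [j [o [eq_i lt_o]]] := block_decomposition size_zeta_vtm_gt0 i.
have size_blocks := block_startD zeta vtm j 5.
rewrite !block_start_zeta_vtm in size_blocks.
rewrite eq_i (factor_blocks size_zeta_vtm_gt0 (K := 5)) in sq; last first.
  by have := size_zeta_vtm_bounds j; case: (tm j) (tm (j + 5)) size_blocks => [] [] /=; lia.
have factor_in : factor vtm j 5 \in [seq vtm_of_tm w | w <- tm_factors6].
  by rewrite factor_vtm5 map_f ?tm_factors6P.
have := allP zeta_short_squares_okP _ factor_in.
move=> /(all_iotaP (k := o)) /(_ ltac:(rewrite /= addn0; lia)).
move=> /(all_iotaP (k := size x)) /(_ ltac:(lia)) /=.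
by rewrite -/(blocks zeta vtm j 5) sq take_size_cat // drop_size_cat // eqxx.
Qed.

Lemma factor_square (w : nat -> nat) i x : factor w i (2 * size x) = x ++ x ->
  forall k, k < size x -> w (i + k) = w (i + size x + k).
Proof.
move=> sq k lt_k; have nth_sq n : n < 2 * size x -> w (i + n) = nth 0 (x ++ x) n.
  by move=> lt_n; rewrite -sq nth_mkseq.
rewrite -addnA !nth_sq; try lia.
by rewrite !nth_cat lt_k ltnNge leq_addr addKn.
Qed.

Lemma contains_square_zeta_vtm x : contains_square zeta_vtm x <-> x \in zeta_vtm_squares.
Proof.
split=> [sqx | ]; last first.
  rewrite !inE => /or3P [] /eqP ->; split=> //.
  - by exists 3; vm_compute.
  - by exists 0; vm_compute.
  - by exists 9; vm_compute.
have [le_x | lt_x] := leqP (size x) 34; first exact: zeta_vtm_short_square.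
case: sqx => _ [i sq]; case: (zeta_vtm_long_square_free (i := i) lt_x).
exact: factor_square.
Qed.

(** * The automaton *)

Definition dfao_state := (bool * bool * nat)%type.

Definition dfao_rel (n : nat) (s : dfao_state) : Prop :=
  let: (a, c, o) := s in
  exists j, [/\ tm j = a, tm j.+1 = c, n = start j + o & o < size (zeta (vtm_letter a c))].

(* As start j = 27 j + 3 tm j, the position 2 (start j + o) + b is o' letters after
   start (2 j), and the blocks 2j, 2j + 1, 2j + 2 carry the pairs (a, ~~ a), (~~ a, c)
   and (c, ~~ c). *)
Definition dfao_step (s : dfao_state) (b : bool) : dfao_state :=
  let: (a, c, o) := s in
  let o' := 3 * a + 2 * o + b in
  let l0 := size (zeta (vtm_letter a (~~ a))) in
  let l1 := size (zeta (vtm_letter (~~ a) c)) in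
  if o' < l0 then (a, ~~ a, o')
  else if o' < l0 + l1 then (~~ a, c, o' - l0)
  else (c, ~~ c, o' - l0 - l1).

Lemma dfao_step_fits a c o (b : bool) : o < size (zeta (vtm_letter a c)) ->
  3 * a + 2 * o + b < size (zeta (vtm_letter a (~~ a))) +
    size (zeta (vtm_letter (~~ a) c)) + size (zeta (vtm_letter c (~~ c))).
Proof. by case: a; case: c; case: b => /=; lia. Qed.

Lemma dfao_step_rel n s (b : bool) : dfao_rel n s -> dfao_rel (2 * n + b) (dfao_step s b).
Proof.
case: s => [[a c] o] [j [ea ec -> lt_o]].
have fits := dfao_step_fits b lt_o.
have [t0 t1 t2 t3] : [/\ tm (2 * j) = a, tm (2 * j).+1 = ~~ a,
                         tm (2 * j.+1) = c & tm (2 * j.+1).+1 = ~~ c].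
  by rewrite !tm_mul2 !tm_mul2S ea ec.
have e2 : (2 * j).+2 = 2 * j.+1 by lia.
have start0 : 2 * (start j + o) + b = start (2 * j) + (3 * a + 2 * o + b).
  by rewrite !block_start_zeta_vtm t0 ea; lia.
have start1 : start (2 * j).+1 = start (2 * j) + size (zeta (vtm_letter a (~~ a))).
  by rewrite block_startS vtm_tm t0 t1.
have start2 : start (2 * j.+1) = start (2 * j).+1 + size (zeta (vtm_letter (~~ a) c)).
  by rewrite -e2 block_startS vtm_tm e2 t1 t2.
rewrite /dfao_step start0; case: ifP => [lt0 | ge0]; [|case: ifP => [lt1 | ge1]].
- by exists (2 * j); rewrite t0 t1.
- exists (2 * j).+1; rewrite t1 e2 t2 start1; split=> //; clear -ge0 lt1; lia.
- exists (2 * j.+1); rewrite t2 t3 start2 start1; split=> //; clear -ge0 ge1 fits; lia.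
Qed.

Definition dfao_states : seq dfao_state :=
  [seq (ac, o) | ac <- [:: (false, true); (true, true); (true, false); (false, false)],
                   o <- iota 0 (size (zeta (vtm_letter ac.1 ac.2)))].

Lemma mem_dfao_states a c o : o < size (zeta (vtm_letter a c)) -> (a, c, o) \in dfao_states.
Proof.
move=> lt_o; apply/allpairsPdep; exists (a, c), o; split=> //; last by rewrite mem_iota.
by case: a c {lt_o} => [] [].
Qed.

Lemma dfao_rel_mem n s : dfao_rel n s -> s \in dfao_states.
Proof. by case: s => [[a c] o] [j [_ _ _ lt_o]]; apply: mem_dfao_states. Qed.

(* The Nerode classes of dfao_states, as computed by minimization; certified by
   dfao_quotient_okP. *)
Definition dfao_class_table : seq nat :=
  [:: 0; 1; 2; 3; 4; 5; 6; 7; 8; 9; 10; 11; 12; 13; 14; 15; 16; 17;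
      18; 19; 20; 21; 22; 23; 24; 25; 26; 27; 28; 29; 30; 31; 32; 33; 34; 35;
      36; 37; 38; 39; 40; 41; 42; 43; 44; 45; 46; 47; 48; 49; 50; 51; 52; 53;
      54; 55; 29; 30; 31; 32; 33; 34; 35; 36; 56; 57; 58; 59; 41; 60; 43; 61;
      62; 63; 64; 65; 66; 67; 68; 69; 70; 0; 1; 2; 3; 4; 5; 6; 71; 72;
      73; 74; 11; 75; 13; 76; 77; 16; 78; 79; 80; 81; 82; 83; 84; 85; 86; 87].

Definition dfao_class (s : dfao_state) : nat := nth 0 dfao_class_table (index s dfao_states).

Definition dfao_rep (k : nat) : dfao_state :=
  nth (false, true, 0) dfao_states (index k dfao_class_table).

Definition dfao_output (s : dfao_state) : nat :=
  let: (a, c, o) := s in nth 0 (zeta (vtm_letter a c)) o.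

Definition dfao_quotient_ok : bool :=
  all (fun s => let r := dfao_rep (dfao_class s) in
    [&& dfao_class s < 88, dfao_output r == dfao_output s,
        dfao_class (dfao_step r false) == dfao_class (dfao_step s false)
      & dfao_class (dfao_step r true) == dfao_class (dfao_step s true)]) dfao_states.

Lemma dfao_quotient_okP : dfao_quotient_ok.
Proof. by vm_compute. Qed.

Definition dfao88_init : 'I_88 := inord (dfao_class (false, true, 0)).

Definition dfao88_delta (q : 'I_88) (b : bool) : 'I_88 :=
  inord (dfao_class (dfao_step (dfao_rep q) b)).

Definition dfao88_out (q : 'I_88) : nat := dfao_output (dfao_rep q).

Lemma dfao88_run n :
  exists2 s, dfao_rel n s & foldl dfao88_delta dfao88_init (bin_msd n) = inord (dfao_class s).
Proof.
elim/ltn_ind: n => -[_ | n IHn].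
  by exists (false, true, 0) => //; exists 0.
have [s rel_s run_s] := IHn n.+1./2 ltac:(lia).
have /and4P [lt_s _ step0 step1] := allP dfao_quotient_okP s (dfao_rel_mem rel_s).
exists (dfao_step s (odd n.+1)).
  have half_n : 2 * n.+1./2 + odd n.+1 = n.+1 by rewrite mul2n addnC odd_double_half.
  by have := dfao_step_rel (odd n.+1) rel_s; rewrite half_n.
rewrite (bin_msd_half (ltn0Sn n)) foldl_rcons run_s /dfao88_delta (inordK lt_s).
by case: (odd n.+1); [rewrite (eqP step1) | rewrite (eqP step0)].
Qed.

Lemma dfao88_generates : dfao_generates dfao88_init dfao88_delta dfao88_out zeta_vtm.
Proof.
move=> n; have [s rel_s ->] := dfao88_run n.
have /and4P [lt_s out_s _ _] := allP dfao_quotient_okP s (dfao_rel_mem rel_s).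
rewrite /dfao88_out (inordK lt_s) (eqP out_s).
case: s rel_s {out_s lt_s} => [[a c] o] [j [<- <- -> lt_o]].
by rewrite zeta_vtm_block vtm_tm.
Qed.

Theorem theorem4 :
  (forall x : seq nat,
      contains_square zeta_vtm x <-> x \in [:: [:: 0]; [:: 1]; [:: 0; 1]])
  /\
  (exists (q0 : 'I_88) (delta : 'I_88 -> bool -> 'I_88) (out : 'I_88 -> nat),
      dfao_generates q0 delta out zeta_vtm).
Proof.
split; first exact: contains_square_zeta_vtm.
by exists dfao88_init, dfao88_delta, dfao88_out; exact: dfao88_generates.
Qed.
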